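(* There is an absolute constant $C>0$ such that the following holds. Let $n\geq 1$, let $a=(a_1,\dots,a_{2n})\in\mathbb{R}^{2n}$, and let $\sigma$ be a uniformly random permutation in the symmetric group $\Pi_{2n}$ of $\{1,\dots,2n\}$. Define $$f(\sigma)=\left|\sum_{i=1}^{n}a_{\sigma(i)}-\sum_{i=n+1}^{2n}a_{\sigma(i)}\right|.$$ Then for every $p\geq 2$, $$\left(\mathbb{E} f^p\right)^{1/p}\leq \mathbb{E}|f|+C\,p\,\|a\|_2,$$ where $\|a\|_2=\left(\sum_{i=1}^{2n}a_i^2\right)^{1/2}$ and $\mathbb{E}$ denotes expectation with respect to the uniform probability measure on $\Pi_{2n}$.
   Context: Equivalently, $\mathbb{E} f^p=\mathbb{E}\left|\sum_{i=1}^{2n}a_i\varepsilon_i\right|^p$ where $\varepsilon=(\varepsilon_1,\dots,\varepsilon_{2n})$ is uniformly distributed on the set $\{\varepsilon\in\{-1,1\}^{2n}:\sum_{i=1}^{2n}\varepsilon_i=0\}$ (Rademacher signs conditioned to sum to zero). *)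

From Stdlib Require Import Reals.
From mathcomp Require Import all_boot all_fingroup.
Local Open Scope R_scope.
Set Implicit Arguments. Unset Strict Implicit. Unset Printing Implicit Defensive.

(* nonnegative real power x^p for x >= 0, with the convention 0^p = 0 (p > 0) *)
Definition rpow (x p : R) : R :=
  if Rle_dec x 0 then 0 else Rpower x p.

Definition Eperm (m : nat) (F : 'S_m -> R) : R :=
  Rmult (Rinv (INR (factorial m))) (\big[Rplus/0]_(s : 'S_m) F s).

(* f(sigma) = | sum_{i<n} a_{sigma i} - sum_{n<=i<2n} a_{sigma i} |,
   indices shifted to 0,...,2n-1 *)
Definition fsig (n : nat) (a : nat -> R) (s : 'S_(n + n)) : R :=
  Rabs (Rminus (\big[Rplus/0]_(i < n + n | (i < n)%N) a (val (s i)))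
               (\big[Rplus/0]_(i < n + n | (n <= i)%N) a (val (s i)))).

Definition l2norm (m : nat) (a : nat -> R) : R :=
  sqrt (\big[Rplus/0]_(i < m) (a i * a i)).

(* Pair position i of the first half with position n + i of the second half
   and let d flip the pairs with d i = true.  Composing a uniform permutation
   with such a flip preserves the uniform law and changes the sign of the
   pair difference b_i, so averaging over all 2^n flips turns the moment
   generating function of the signed sum S = sum_i b_i into a product of
   cosh(lam b_i) <= exp (2 lam^2 b_i^2).  With sum_i b_i^2 <= 2 |a|^2 this gives
   E exp(lam S) <= exp (4 lam^2 |a|^2), and the Chernoff-type inequality
   |x|^p <= (p/(e lam))^p exp (lam |x|) at lam = 1/(2 |a|) yields
   (E f^p)^(1/p) <= 4 p |a|, even without the E f term. *)

From Stdlib Require Import Reals Lra.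
From HB Require Import structures.
From mathcomp Require Import all_boot all_fingroup.
Local Open Scope R_scope.

Lemma Rplus_A : associative Rplus. Proof. by move=> x y z; rewrite Rplus_assoc. Qed.
Lemma Rmult_A : associative Rmult. Proof. by move=> x y z; rewrite Rmult_assoc. Qed.
HB.instance Definition _ := Monoid.isComLaw.Build R 0 Rplus Rplus_A Rplus_comm Rplus_0_l.
HB.instance Definition _ := Monoid.isComLaw.Build R 1 Rmult Rmult_A Rmult_comm Rmult_1_l.
HB.instance Definition _ := Monoid.isMulLaw.Build R 0 Rmult Rmult_0_l Rmult_0_r.
HB.instance Definition _ :=
  Monoid.isAddLaw.Build R Rmult Rplus Rmult_plus_distr_r Rmult_plus_distr_l.

Lemma sumR_le (I : finType) (P : pred I) (F G : I -> R) :
  (forall i, P i -> F i <= G i) ->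
  \big[Rplus/0]_(i | P i) F i <= \big[Rplus/0]_(i | P i) G i.
Proof.
move=> FG; apply: (big_ind2 (fun x y => x <= y)) => //; first lra.
by move=> x1 x2 y1 y2; lra.
Qed.

Lemma sumR_ge0 (I : finType) (P : pred I) (F : I -> R) :
  (forall i, P i -> 0 <= F i) -> 0 <= \big[Rplus/0]_(i | P i) F i.
Proof.
move=> F0; apply: (big_ind (fun x => 0 <= x)) => //; first lra.
by move=> x y; lra.
Qed.

Lemma sumR_opp (I : finType) (P : pred I) (F : I -> R) :
  \big[Rplus/0]_(i | P i) (- F i) = - \big[Rplus/0]_(i | P i) F i.
Proof. by rewrite (big_morph Ropp Ropp_plus_distr Ropp_0). Qed.

Lemma prodR_le (I : finType) (F G : I -> R) :
  (forall i, 0 <= F i <= G i) -> \big[Rmult/1]_i F i <= \big[Rmult/1]_i G i.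
Proof.
move=> FG; suff [] : 0 <= \big[Rmult/1]_i F i <= \big[Rmult/1]_i G i by [].
apply: (big_ind2 (fun x y => 0 <= x <= y)) => [| x1 x2 y1 y2 [? ?] [? ?] |i _].
- lra.
- by split; [apply: Rmult_le_pos | apply: Rmult_le_compat].
- exact: FG.
Qed.

Lemma exp_sum (I : finType) (F : I -> R) :
  exp (\big[Rplus/0]_i F i) = \big[Rmult/1]_i exp (F i).
Proof. by rewrite (big_morph exp exp_plus exp_0). Qed.

Lemma exp_le_exp x y : x <= y -> exp x <= exp y.
Proof. by case/Rle_lt_or_eq_dec => [/exp_increasing/Rlt_le | ->]; [| apply: Rle_refl]. Qed.

Lemma exp_mul_abs_le c x : exp (c * Rabs x) <= exp (c * x) + exp (- c * x).
Proof.
have := exp_pos (c * x); have := exp_pos (- c * x).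
rewrite /Rabs; case: Rcase_abs => _; last lra.
by rewrite -Ropp_mult_distr_r Ropp_mult_distr_l; lra.
Qed.

(* A crude form of cosh x <= exp (x^2 / 2): near 0 use exp(+-x)(1 -+ x) <= 1,
   far from 0 use +-x <= 2 x^2. *)
Lemma exp_add_exp_opp_le x : exp x + exp (- x) <= 2 * exp (2 * (x * x)).
Proof.
have := exp_ineq1_le (2 * (x * x)).
have ex := exp_pos x; have enx := exp_pos (- x).
have exp_opp : exp x * exp (- x) = 1 by rewrite -exp_plus Rplus_opp_r exp_0.
case: (Rle_lt_dec (x * x) (1 / 2)) => x2.
- have := exp_ineq1_le x; have := exp_ineq1_le (- x).
  have : -1 < x < 1 by nra.
  move=> x1 ex1 enx1.
  have : exp x * (1 - x) <= 1 by nra.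
  have : exp (- x) * (1 + x) <= 1 by nra.
  nra.
- have /exp_le_exp : x <= 2 * (x * x) by nra.
  have /exp_le_exp : - x <= 2 * (x * x) by nra.
  lra.
Qed.

(* The Chernoff inequality |x|^p <= (p / (e lam))^p exp (lam |x|), from ln t <= t - 1
   at t = lam |x| / p. *)
Lemma rpow_abs_le_exp p lam x : 0 < p -> 0 < lam ->
  rpow (Rabs x) p <= exp (p * ln (p / lam) - p) * exp (lam * Rabs x).
Proof.
move=> p0 lam0; have := exp_pos (p * ln (p / lam) - p); have := exp_pos (lam * Rabs x).
rewrite /rpow; case: Rle_dec => x_le0 /= E0 K0; first by apply: Rmult_le_pos; lra.
have x_pos : 0 < Rabs x by lra.
set t := lam * Rabs x / p.
have t0 : 0 < t by apply: Rdiv_lt_0_compat => //; apply: Rmult_lt_0_compat.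
have ln_t : ln t <= t - 1 by have := exp_ineq1_le (ln t); rewrite exp_ln //; lra.
have ln_x : ln (Rabs x) = ln (p / lam) + ln t.
  rewrite -ln_mult; last exact: t0.
    by congr ln; rewrite /t; field; lra.
  by apply: Rdiv_lt_0_compat.
rewrite /Rpower ln_x -exp_plus; apply: exp_le_exp.
have -> : lam * Rabs x = p * t by rewrite /t; field; lra.
nra.
Qed.

Lemma fact_INR_gt0 m : 0 < INR m`!.
Proof. by apply: lt_0_INR; apply/ltP; exact: fact_gt0. Qed.

Section UniformPermutations.
Context {m : nat}.
Implicit Types F G : 'S_m -> R.

Lemma Eperm_le F G : (forall s, F s <= G s) -> Eperm F <= Eperm G.
Proof.
move=> FG; apply: Rmult_le_compat_l; last exact: sumR_le.
exact/Rlt_le/Rinv_0_lt_compat/fact_INR_gt0.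
Qed.

Lemma Eperm_ge0 F : (forall s, 0 <= F s) -> 0 <= Eperm F.
Proof.
move=> F0; apply: Rmult_le_pos; last exact: sumR_ge0.
exact/Rlt_le/Rinv_0_lt_compat/fact_INR_gt0.
Qed.

Lemma Eperm_const c : Eperm (fun _ : 'S_m => c) = c.
Proof.
have iterE k : iter k (Rplus c) 0 = INR k * c.
  elim: k => [|k IH]; first by rewrite /=; lra.
  by rewrite S_INR -[iter _ _ _]/(c + iter k (Rplus c) 0) IH; lra.
have := fact_INR_gt0 m.
rewrite /Eperm big_const card_Sn iterE => fact0; field; lra.
Qed.

Lemma EpermD F G : Eperm (fun s => F s + G s) = Eperm F + Eperm G.
Proof. by rewrite /Eperm big_split Rmult_plus_distr_l. Qed.

Lemma EpermZ c F : Eperm (fun s => c * F s) = c * Eperm F.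
Proof. by rewrite /Eperm -big_distrr /= -!Rmult_assoc (Rmult_comm c). Qed.

Lemma Eperm_sum (I : finType) (F : I -> 'S_m -> R) :
  Eperm (fun s => \big[Rplus/0]_i F i s) = \big[Rplus/0]_i Eperm (F i).
Proof. by rewrite /Eperm exchange_big big_distrr. Qed.

Lemma Eperm_mulg_l t F : Eperm (fun s => F (t * s)%g) = Eperm F.
Proof. by rewrite /Eperm [in RHS](reindex_inj (mulgI t)). Qed.

End UniformPermutations.

Section HalfSwaps.
Variable n : nat.
Variable a : nat -> R.

Lemma sum_ffun_const (c : R) :
  \big[Rplus/0]_(d : {ffun 'I_n -> bool}) c = \big[Rmult/1]_(i < n) 2 * c.
Proof.
have := @bigA_distr_bigA R 0 1 Rmult Rplus 'I_n bool (fun _ _ => 1).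
rewrite (eq_bigr (fun=> 2)) => [|i _]; last by rewrite big_bool /=; lra.
move=> ->; rewrite big_distrl /=.
by apply: eq_bigr => d _; rewrite big1 // Rmult_1_l.
Qed.

Definition swap_halves (d : {ffun 'I_n -> bool}) (j : 'I_(n + n)) : 'I_(n + n) :=
  match split j with
  | inl i => if d i then rshift n i else lshift n i
  | inr i => if d i then lshift n i else rshift n i
  end.

Lemma split_lshift (i : 'I_n) : split (lshift n i) = inl i.
Proof. exact: (unsplitK (inl i : 'I_n + 'I_n)). Qed.

Lemma split_rshift (i : 'I_n) : split (rshift n i) = inr i.
Proof. exact: (unsplitK (inr i : 'I_n + 'I_n)). Qed.

Lemma swap_halvesK d : involutive (swap_halves d).
Proof.
move=> j; rewrite /swap_halves -{2}(splitK j).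
by case: (split j) => i; case E: (d i); rewrite ?split_lshift ?split_rshift /= E.
Qed.

Definition half_swap d : 'S_(n + n) := perm (can_inj (swap_halvesK d)).

Definition pair_diff (s : 'S_(n + n)) (i : 'I_n) : R :=
  a (s (lshift n i)) - a (s (rshift n i)).

Lemma fsig_pair_diff s : fsig a s = Rabs (\big[Rplus/0]_i pair_diff s i).
Proof.
rewrite /fsig /pair_diff !big_split_ord /=.
rewrite [X in X + _ - _](eq_bigl xpredT) => [|i /=]; last by rewrite ltn_ord.
rewrite [X in _ + X - _]big_pred0 => [|i /=]; last by rewrite ltnNge leq_addr.
rewrite [X in _ - (X + _)]big_pred0 => [|i /=]; last by rewrite leqNgt ltn_ord.
rewrite [X in _ - (_ + X)](eq_bigl xpredT) => [|i /=]; last by rewrite leq_addr.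
by rewrite !Rplus_0_r !Rplus_0_l /Rminus -sumR_opp -big_split.
Qed.

Lemma pair_diff_half_swap d s i :
  pair_diff (half_swap d * s)%g i = if d i then - pair_diff s i else pair_diff s i.
Proof.
rewrite /pair_diff !permM !permE /swap_halves split_lshift split_rshift.
by case: (d i) => //; lra.
Qed.

Lemma sum_pair_diff_sq_le s :
  \big[Rplus/0]_i (pair_diff s i * pair_diff s i) <=
  2 * \big[Rplus/0]_(j < n + n) (a j * a j).
Proof.
rewrite [X in _ <= 2 * X](reindex_inj (@perm_inj _ s)) big_split_ord /=.
rewrite -big_split /= big_distrr /=; apply: sumR_le => i _; rewrite /pair_diff.
set x := a _; set y := a _; have := Rle_0_sqr (x + y); rewrite /Rsqr; nra.
Qed.

(* Averaging over the 2^n half swaps d replaces exp (lam * S) by the product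
   of the cosh (lam * pair_diff s i). *)
Lemma sum_half_swaps_exp_le lam s :
  \big[Rplus/0]_d exp (lam * \big[Rplus/0]_i pair_diff (half_swap d * s)%g i) <=
  \big[Rmult/1]_(i < n) 2 *
    exp (\big[Rplus/0]_i (2 * ((lam * pair_diff s i) * (lam * pair_diff s i)))).
Proof.
pose H i (b : bool) := exp (lam * (if b then - pair_diff s i else pair_diff s i)).
rewrite (eq_bigr (fun d : {ffun 'I_n -> bool} => \big[Rmult/1]_i H i (d i))) => [|d _];
  last first.
  by rewrite big_distrr exp_sum; apply: eq_bigr => i _; rewrite pair_diff_half_swap.
rewrite -bigA_distr_bigA exp_sum -big_split /=.
apply: prodR_le => i; rewrite big_bool /H /=.
have e_pos := exp_pos (lam * pair_diff s i).
have e_opp_pos := exp_pos (lam * - pair_diff s i).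
split; first lra.
have -> : lam * - pair_diff s i = - (lam * pair_diff s i) by ring.
by rewrite Rplus_comm; exact: exp_add_exp_opp_le.
Qed.

Lemma Eperm_exp_pair_diff_le lam :
  Eperm (fun s => exp (lam * \big[Rplus/0]_i pair_diff s i)) <=
  exp (4 * (lam * lam) * \big[Rplus/0]_(j < n + n) (a j * a j)).
Proof.
have N0 : 0 < \big[Rmult/1]_(i < n) 2.
  by apply: (big_ind (fun x => 0 < x)) => [|x y|i _]; [lra | exact: Rmult_lt_0_compat | lra].
apply: (Rmult_le_reg_l _ _ _ N0).
rewrite -sum_ffun_const -(Eperm_const (m := n + n) (_ * exp _)).
rewrite (eq_bigr (fun d => Eperm (fun s =>
  exp (lam * \big[Rplus/0]_i pair_diff (half_swap d * s)%g i)))) => [|d _]; last first.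
  exact/esym/(Eperm_mulg_l (half_swap d) (fun s => exp (lam * \big[Rplus/0]_i pair_diff s i))).
rewrite -Eperm_sum; apply: Eperm_le => s.
apply: (Rle_trans _ _ _ (sum_half_swaps_exp_le lam s)).
apply: Rmult_le_compat_l; first lra.
apply: exp_le_exp.
rewrite (eq_bigr (fun i => 2 * (lam * lam) * (pair_diff s i * pair_diff s i))) => [|i _];
  last by ring.
rewrite -big_distrr /=.
have lam2 : 0 <= 2 * (lam * lam) by have := Rle_0_sqr lam; rewrite /Rsqr; lra.
apply: Rle_trans (Rmult_le_compat_l _ _ _ lam2 (sum_pair_diff_sq_le s)) _.
set Q := \big[Rplus/0]_(j < n + n) _; apply: Req_le; ring.
Qed.

Lemma Eperm_fsig_moment_le p L : 0 < p -> 0 < L ->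
  \big[Rplus/0]_(j < n + n) (a j * a j) <= L * L ->
  Eperm (fun s => rpow (@fsig n a s) p) <= 2 * exp 1 * exp (p * ln (2 * p * L) - p).
Proof.
move=> p0 L0 QL; set lam := / (2 * L).
have lam0 : 0 < lam by apply: Rinv_0_lt_compat; lra.
have -> : 2 * p * L = p / lam by rewrite /lam; field; lra.
set K := exp (p * ln (p / lam) - p).
have mgf_le (mu : R) : mu * mu = lam * lam ->
    Eperm (fun s => exp (mu * \big[Rplus/0]_i pair_diff s i)) <= exp 1.
  move=> mu2; apply: (Rle_trans _ _ _ (Eperm_exp_pair_diff_le mu)); apply: exp_le_exp.
  rewrite mu2 /lam; apply: (Rle_trans _ (4 * (/ (2 * L) * / (2 * L)) * (L * L))).
    by apply: Rmult_le_compat_l => //; have := Rle_0_sqr (/ (2 * L)); rewrite /Rsqr; lra.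
  by apply: Req_le; field; lra.
apply: (Rle_trans _ (Eperm (fun s =>
  K * exp (lam * \big[Rplus/0]_i pair_diff s i) +
  K * exp (- lam * \big[Rplus/0]_i pair_diff s i)))).
  apply: Eperm_le => s; rewrite fsig_pair_diff -Rmult_plus_distr_l.
  apply: Rle_trans (rpow_abs_le_exp _ _ _ p0 lam0) _.
  by apply: Rmult_le_compat_l; [exact/Rlt_le/exp_pos | exact: exp_mul_abs_le].
rewrite EpermD !EpermZ -Rmult_plus_distr_l Rmult_comm.
apply: Rmult_le_compat_r; first exact/Rlt_le/exp_pos.
apply: Rle_trans (Rplus_le_compat _ _ _ _ (mgf_le lam erefl)
                                           (mgf_le (- lam) (Rmult_opp_opp _ _))) _.
lra.
Qed.

End HalfSwaps.

Lemma ln_le_ln {x y} : 0 < x -> x <= y -> ln x <= ln y.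
Proof.
by move=> x0; case/Rle_lt_or_eq_dec => [/(ln_increasing _ _ x0)/Rlt_le | ->]; [| apply: Rle_refl].
Qed.

(* (2 e (y/e)^p)^(1/p) = (2 e)^(1/p) y / e <= 2 y as soon as p >= 1. *)
Lemma rpow_inv_le_of_le_exp p y E : 1 <= p -> 0 < y ->
  E <= 2 * exp 1 * exp (p * ln y - p) -> rpow E (/ p) <= 2 * y.
Proof.
move=> p1 y0 Ey; rewrite /rpow; case: Rle_dec => E0 /=; first lra.
have ln2 : 0 < ln 2 by rewrite -ln_1; apply: ln_increasing; lra.
have lnE : ln E <= ln 2 + 1 + (p * ln y - p).
  have E_pos : 0 < E by lra.
  apply: Rle_trans (ln_le_ln E_pos Ey) _.
  rewrite !ln_mult ?ln_exp; try apply: exp_pos; try lra.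
  by apply: Rmult_lt_0_compat; [lra | apply: exp_pos].
have p_inv : 0 < / p <= 1.
  by split; [apply: Rinv_0_lt_compat | rewrite -Rinv_1; apply: Rinv_le_contravar]; lra.
rewrite /Rpower -[2 * y]exp_ln; last lra.
apply: exp_le_exp; rewrite ln_mult //; last lra.
have -> : ln y = / p * (p * ln y - p) + 1 by field; lra.
have := Rmult_le_compat_l _ _ _ (Rlt_le _ _ (proj1 p_inv)) lnE.
nra.
Qed.

Theorem theorem1p1 :
  exists C : R, (0 < C) /\
    forall (n : nat), (1 <= n)%N ->
    forall (a : nat -> R) (p : R), (2 <= p) ->
      (rpow (Eperm (m := n + n) (fun s => rpow (@fsig n a s) p)) (/ p)
        <= Eperm (m := n + n) (fun s => Rabs (@fsig n a s)) + C * p * l2norm (n + n)%nat a).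
Proof.
exists 4; split; first lra.
move=> n _ a p p2.
have := @Eperm_ge0 _ (fun s => Rabs (@fsig n a s)) (fun s => Rabs_pos _).
suff : rpow (Eperm (fun s => rpow (@fsig n a s) p)) (/ p) <= 4 * p * l2norm (n + n) a.
  by lra.
apply: Rle_plus_epsilon => eps eps0.
have delta0 : 0 < eps / (4 * p) by apply: Rdiv_lt_0_compat; lra.
have norm0 : 0 <= l2norm (n + n) a by apply: sqrt_pos.
set L := l2norm (n + n) a + eps / (4 * p).
have QL : \big[Rplus/0]_(j < n + n) (a j * a j) <= L * L.
  rewrite -[X in X <= _]sqrt_sqrt; last by apply: sumR_ge0 => j _; apply: Rle_0_sqr.
  by apply: Rmult_le_compat; rewrite -/(l2norm _ a) /L; lra.
have -> : 4 * p * l2norm (n + n) a + eps = 2 * (2 * p * L) by rewrite /L; field; lra.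
apply: rpow_inv_le_of_le_exp; [lra | apply: Rmult_lt_0_compat; rewrite /L; lra |].
by apply: Eperm_fsig_moment_le => //; [lra | rewrite /L; lra].
Qed.
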